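(* Let $E\in M_n(\mathbb{FT})$ be idempotent. Then: (i) $E$ has the unique eigenvalue $0$, which is its maximum cycle mean, and the corresponding eigenspace is $C(E)$; (ii) $E_{i,i}=0$ if and only if $i$ is a node of the critical graph of $E$; (iii) the columns of $E$ with diagonal entry $0$ form a generating set for $C(E)$; (iv) every extremal point of $C(E)$ is, up to scaling, a column of $E$ with $0$ in the diagonal position; (v) the rows of $E$ with diagonal entry $0$ form a generating set for $R(E)$; (vi) every extremal point of $R(E)$ is, up to scaling, a row of $E$ with $0$ in the diagonal position; (vii) the rank of $E$ equals the number of strongly connected components of the critical graph of $E$; (viii) each strongly connected component of the critical graph of $E$ is a complete subgraph of $\Gamma_E$; (ix) if $i,j$ lie in the same strongly connected component of the critical graph, then the $i$th column of $E$ is a tropical multiple (real shift) of the $j$th column; (x) if $i,j$ lie in the same strongly connected component of the critical graph, then the $i$th row of $E$ is a tropical multiple of the $j$th row.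
   Context: $\mathbb{FT}$ is $\mathbb{R}$ with $a\oplus b=\max(a,b)$, $a\otimes b=a+b$; $M_n(\mathbb{FT})$ is the semigroup of real $n\times n$ matrices under $(A\otimes B)_{i,j}=\max_k(A_{i,k}+B_{k,j})$. A scalar $\lambda\in\mathbb{R}$ is an eigenvalue of $A$ if $A\otimes x=\lambda\otimes x$ for some $x\in\mathbb{R}^n$, where $(\lambda\otimes x)_i=\lambda+x_i$; the eigenspace is the set of all such $x$. $C(A)$, $R(A)\subseteq\mathbb{R}^n$ are the sets of finite componentwise maxima of real shifts of columns, resp. rows, of $A$ (submodules under componentwise max and shifts). A point $x$ of such a set $X$ is extremal if $X\setminus\{\lambda\otimes x:\lambda\in\mathbb{R}\}$ is closed under componentwise max and shifts. The rank of an idempotent $E$ is the minimal cardinality of a generating set of $C(E)$. $\Gamma_A$ is the complete weighted digraph on $\{1,\dots,n\}$ with edge $j\to i$ of weight $A_{i,j}$; the maximum cycle mean is the maximum arithmetic mean of edge weights over closed paths; the critical graph consists of all nodes and edges lying on closed paths whose mean equals the maximum cycle mean. *)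

From HB Require Import structures.
From mathcomp Require Import all_boot all_order all_algebra.
From mathcomp Require Import boolp reals.
From Stdlib Require Import Relations.

Set Implicit Arguments.
Unset Strict Implicit.
Unset Printing Implicit Defensive.

Import Order.TTheory GRing.Theory Num.Theory.
Local Open Scope ring_scope.

Section Tropical.
Variable R : realType.
Variable n : nat.
(* Dimension is n.+1 (i.e. n >= 1): indices are 'I_n.+1. *)
Local Notation N := n.+1.
Local Notation mat := 'M[R]_N.
Local Notation vec := 'cV[R]_N.

Definition tmul (A B : mat) : mat :=
  \matrix_(i, j) \big[Num.max/(A i ord0 + B ord0 j)]_(k < N) (A i k + B k j).

Definition tmulv (A : mat) (x : vec) : vec :=
  \col_i \big[Num.max/(A i ord0 + x ord0 0)]_(k < N) (A i k + x k 0).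

Definition tshift (l : R) (x : vec) : vec := \col_i (l + x i 0).

Definition vmax (x y : vec) : vec := \col_i Num.max (x i 0) (y i 0).

Definition tidempotent (A : mat) : Prop := tmul A A = A.

Definition is_teigenvalue (A : mat) (l : R) : Prop :=
  exists x : vec, tmulv A x = tshift l x.

Definition teigenspace (A : mat) (l : R) (x : vec) : Prop :=
  tmulv A x = tshift l x.

Definition tspan (S : vec -> Prop) (x : vec) : Prop :=
  exists (l0 : R) (v0 : vec) (l : seq (R * vec)),
    S v0 /\ (forall p, p \in l -> S p.2) /\
    x = foldr (fun p acc => vmax (tshift p.1 p.2) acc) (tshift l0 v0) l.

Definition colspace (A : mat) : vec -> Prop :=
  tspan (fun v => exists j, v = col j A).

Definition rowspace (A : mat) : vec -> Prop :=
  tspan (fun v => exists i, v = (row i A)^T).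

Definition generates (S X : vec -> Prop) : Prop :=
  forall x, X x <-> tspan S x.

Definition tclosed (X : vec -> Prop) : Prop :=
  (forall x y, X x -> X y -> X (vmax x y)) /\
  (forall l x, X x -> X (tshift l x)).

Definition extremal (X : vec -> Prop) (x : vec) : Prop :=
  X x /\ tclosed (fun y => X y /\ ~ (exists l, y = tshift l x)).

(* rank of an idempotent: minimal cardinality of a generating set of C(E)
   (generating sets of minimal cardinality are finite, since C(E) is
   finitely generated, so it suffices to range over finite sequences) *)
Definition has_rank (A : mat) (r : nat) : Prop :=
  (exists S : seq vec, size S = r /\ generates (fun v => v \in S) (colspace A))
  /\ (forall S : seq vec, generates (fun v => v \in S) (colspace A) ->
        (r <= size S)%N).

(* Closed paths in Gamma_A: a nonempty node sequence x :: s, with edges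
   x -> s_0 -> ... -> s_last -> x; the edge j -> i has weight A i j. *)
Definition cycle_edges (x : 'I_N) (s : seq 'I_N) : seq ('I_N * 'I_N) :=
  zip (x :: s) (rcons s x).

Definition cycle_weight (A : mat) (x : 'I_N) (s : seq 'I_N) : R :=
  \sum_(e <- cycle_edges x s) A e.2 e.1.

Definition cycle_mean (A : mat) (x : 'I_N) (s : seq 'I_N) : R :=
  cycle_weight A x s / (size s).+1%:R.

Definition is_max_cycle_mean (A : mat) (mu : R) : Prop :=
  (forall x s, cycle_mean A x s <= mu) /\ (exists x s, cycle_mean A x s = mu).

Definition critical_cycle (A : mat) (x : 'I_N) (s : seq 'I_N) : Prop :=
  forall y t, cycle_mean A y t <= cycle_mean A x s.

Definition crit_node (A : mat) (i : 'I_N) : Prop :=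
  exists x s, critical_cycle A x s /\ i \in x :: s.

Definition crit_edge (A : mat) (i j : 'I_N) : Prop :=
  exists x s, critical_cycle A x s /\ (i, j) \in cycle_edges x s.

Definition same_scc (A : mat) (i j : 'I_N) : Prop :=
  crit_node A i /\ crit_node A j /\
  clos_refl_trans _ (crit_edge A) i j /\ clos_refl_trans _ (crit_edge A) j i.

Definition n_scc (A : mat) : nat :=
  #|[set [set j | `[< same_scc A i j >]] | i in [set i | `[< crit_node A i >]]]|.

End Tropical.

(* Idempotency E = E (x) E says E i k + E k j <= E i j, with equality for some k.
   Iterating such choices of k and using a periodic point of the iteration, every
   entry factors as E i j = E i k + E k j through a critical index, E k k = 0. Hence
   all diagonal entries are <= 0, the maximum cycle mean and the only eigenvalue are
   0, and a fixed point x of E is the max over critical k of the column k shifted by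
   x k. The critical graph is given by the relation E i j + E j i = 0: it is an
   equivalence on the critical nodes, its classes are complete, and columns (rows)
   in one class are shifts of each other. A critical column cannot be produced by a
   combination without being a shift of one of its terms, which yields the extremal
   points and the rank. Rows follow by transposition. *)

From HB Require Import structures.
From mathcomp Require Import all_boot all_order all_algebra.
From mathcomp Require Import boolp reals.
From Stdlib Require Import Relations.
From mathcomp Require Import lra.
Import Order.TTheory GRing.Theory Num.Theory.
Local Open Scope ring_scope.

Set Implicit Arguments.
Unset Strict Implicit.
Unset Printing Implicit Defensive.

Lemma bigmax_seed_arg (d : Order.disp_t) (T : orderType d) (I : finType) (i0 : I)
    (F : I -> T) :
  \big[Order.max/F i0]_i F i = F [arg max_(i > i0) F i]%O.
Proof.
case: arg_maxP => // j _ Fj_max; apply/le_anti/andP; split; last exact: le_bigmax.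
by apply: bigmax_le => [|i _]; apply: Fj_max.
Qed.

Lemma iter_periodic_point (T : finType) (f : T -> T) x :
  exists p m, iter m.+1 f (iter p f x) = iter p f x.
Proof.
have /trajectP [p lt_p_ord loop_x] := looping_order f x.
exists p, (fingraph.order f x - p.+1)%N.
by rewrite -iterD subnSK // subnK 1?ltnW.
Qed.

Lemma mem_zip_rcons (T : eqType) (b0 a0 i : T) (s : seq T) :
  i \in a0 :: s -> exists b, (i, b) \in zip (a0 :: s) (rcons s b0).
Proof.
elim: s a0 => [|c s IH] a0; first by rewrite mem_seq1 => /eqP ->; exists b0; rewrite mem_seq1.
rewrite inE => /orP [/eqP ->|/IH [b ib]]; first by exists c; rewrite mem_head.
by exists b; rewrite /= inE ib orbT.
Qed.

Lemma leq_size_rel (T U : eqType) (s : seq T) (t : seq U) (rel : T -> U -> Prop) :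
  uniq s -> (forall x, x \in s -> exists2 y, y \in t & rel x y) ->
  {in s &, forall x x', forall y, rel x y -> rel x' y -> x = x'} ->
  (size s <= size t)%N.
Proof.
move=> s_uniq s_t rel_inj; case: t s_t => [|y0 t] s_t.
  by case: s s_uniq s_t rel_inj => // x s _ /(_ x (mem_head _ _)) [].
have [g g_rel] : {g : T -> U & forall x, x \in s -> g x \in y0 :: t /\ rel x (g x)}.
  apply: (choice (P := fun x y => x \in s -> y \in y0 :: t /\ rel x y)) => x.
  by case: (boolP (x \in s)) => [/s_t [y]|_]; [exists y | exists y0].
rewrite -(size_map g); apply: uniq_leq_size; last by move=> _ /mapP [x /g_rel [] ? _ ->].
rewrite map_inj_in_uniq // => x x' xs x's e.
apply: (rel_inj x x' xs x's (g x)); first exact: (g_rel x xs).2.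
by rewrite e; exact: (g_rel x' x's).2.
Qed.

Section MaxPlusMatrix.
Variables (R : realType) (n : nat).
Local Notation N := n.+1.
Local Notation vec := 'cV[R]_N.
Implicit Types (A B : 'M[R]_N) (x y v : vec) (l : R) (L : seq (R * vec)) (p : R * vec).

Lemma tshift0 x : tshift 0 x = x.
Proof. by apply/matrixP => i z; rewrite ord1 mxE add0r. Qed.

Lemma tshiftD l l' x : tshift l (tshift l' x) = tshift (l + l') x.
Proof. by apply/matrixP => i z; rewrite !mxE addrA. Qed.

Lemma tmul_ge A B i k j : A i k + B k j <= tmul A B i j.
Proof. by rewrite mxE; exact: (le_bigmax _ (fun k => A i k + B k j)). Qed.

Lemma tmul_attained A B i j : exists k, tmul A B i j = A i k + B k j.
Proof. by rewrite mxE (bigmax_seed_arg _ (fun k => A i k + B k j)); eexists. Qed.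

Lemma tmulv_ge A x i k : A i k + x k 0 <= tmulv A x i 0.
Proof. by rewrite mxE; exact: (le_bigmax _ (fun k => A i k + x k 0)). Qed.

Lemma tmulv_attained A x i : exists k, tmulv A x i 0 = A i k + x k 0.
Proof. by rewrite mxE (bigmax_seed_arg _ (fun k => A i k + x k 0)); eexists. Qed.

Lemma tmulv_col A B j : tmulv A (col j B) = col j (tmul A B).
Proof. by apply/matrixP => i z; rewrite ord1 !mxE; under eq_bigr do rewrite mxE. Qed.

Lemma tmulv_vmax A x y : tmulv A (vmax x y) = vmax (tmulv A x) (tmulv A y).
Proof.
apply/matrixP => i z; rewrite ord1 [RHS]mxE; apply/le_anti/andP; split.
  have [k ->] := tmulv_attained A (vmax x y) i.
  by rewrite mxE addr_maxr le_max2 // tmulv_ge.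
rewrite ge_max; apply/andP; split.
  have [k ->] := tmulv_attained A x i.
  by apply: le_trans (tmulv_ge _ _ i k); rewrite mxE lerD2l le_max lexx.
have [k ->] := tmulv_attained A y i.
by apply: le_trans (tmulv_ge _ _ i k); rewrite mxE lerD2l le_max lexx orbT.
Qed.

Lemma tmulv_tshift A l x : tmulv A (tshift l x) = tshift l (tmulv A x).
Proof.
apply/matrixP => i z; rewrite ord1 [RHS]mxE; apply/le_anti/andP; split.
  have [k ->] := tmulv_attained A (tshift l x) i.
  by rewrite mxE addrCA lerD2l tmulv_ge.
have [k ->] := tmulv_attained A x i.
by apply: le_trans (tmulv_ge _ _ i k); rewrite mxE addrCA.
Qed.

Lemma teigenspaceP A l x :
  teigenspace A l x <->
  (forall i k, A i k + x k 0 <= l + x i 0) /\ (forall i, exists k, l + x i 0 = A i k + x k 0).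
Proof.
split=> [Ax|[x_ge x_att]].
  have Axi i : tmulv A x i 0 = l + x i 0 by rewrite Ax mxE.
  split=> [i k|i]; first by rewrite -Axi tmulv_ge.
  by have [k Ak] := tmulv_attained A x i; exists k; rewrite -Axi.
apply/matrixP => i z; rewrite ord1 [RHS]mxE; apply/le_anti/andP; split.
  by have [k ->] := tmulv_attained A x i; exact: x_ge.
by have [k ->] := x_att i; exact: tmulv_ge.
Qed.

Lemma teigenspace_tclosed A l : tclosed (teigenspace A l).
Proof.
split=> [x y Ex Ey|c x Ex]; rewrite /teigenspace.
  by rewrite tmulv_vmax Ex Ey; apply/matrixP => i z; rewrite !mxE addr_maxr.
by rewrite tmulv_tshift Ex !tshiftD addrC.
Qed.

Lemma tmul_tr A B : tmul A^T B^T = (tmul B A)^T.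
Proof.
apply/matrixP => i j; rewrite !mxE.
by under eq_bigr => k _ do rewrite !mxE addrC; rewrite addrC.
Qed.

Lemma tidempotent_tr A : tidempotent A -> tidempotent A^T.
Proof. by rewrite /tidempotent tmul_tr => ->. Qed.

Lemma rowspace_tr A : rowspace A = colspace A^T.
Proof.
rewrite /rowspace /colspace; congr tspan; apply/funext => v; apply/propext.
by split=> [[i ->]|[i ->]]; exists i; rewrite tr_row.
Qed.

Definition tcomb (l0 : R) (v0 : vec) (L : seq (R * vec)) : vec :=
  foldr (fun p acc => vmax (tshift p.1 p.2) acc) (tshift l0 v0) L.

Lemma tcomb_leP l0 v0 L i (y : R) :
  tcomb l0 v0 L i 0 <= y <-> forall p, p \in (l0, v0) :: L -> p.1 + p.2 i 0 <= y.
Proof.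
elim: L => [|q L IH] /=.
  rewrite mxE; split=> [le_y p|/(_ (l0, v0) (mem_head _ _)) //].
  by rewrite mem_seq1 => /eqP ->.
rewrite -/(tcomb l0 v0 L) /vmax mxE ge_max mxE.
split=> [/andP [le_q /IH le_L] p|le_y].
  by rewrite !inE => /or3P [p_0|/eqP -> //|p_L]; apply: le_L; rewrite inE ?p_0 ?p_L ?orbT.
apply/andP; split; first by apply: le_y; rewrite !inE eqxx orbT.
by apply/IH => p; rewrite inE => /orP [p_0|p_L]; apply: le_y; rewrite !inE ?p_0 ?p_L ?orbT.
Qed.

Lemma le_tcomb l0 v0 L i p :
  p \in (l0, v0) :: L -> p.1 + p.2 i 0 <= tcomb l0 v0 L i 0.
Proof. by move: p; apply/tcomb_leP. Qed.

Lemma tcomb_attained l0 v0 L i :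
  exists2 p, p \in (l0, v0) :: L & tcomb l0 v0 L i 0 = p.1 + p.2 i 0.
Proof.
elim: L => [|q L [p p_L IH]] /=; first by exists (l0, v0); rewrite ?mem_head ?mxE.
rewrite -/(tcomb l0 v0 L) /vmax mxE IH mxE; case: leP => _.
  by exists p => //; move: p_L; rewrite !inE => /orP [->|->]; rewrite ?orbT.
by exists q; rewrite // !inE eqxx orbT.
Qed.

Lemma tspan_shifts (S S' : vec -> Prop) x :
  (forall v, S' v -> exists w l, S w /\ v = tshift l w) -> tspan S' x -> tspan S x.
Proof.
move=> S'_S [l0 [v0 [L [S'v0 [S'L ->]]]]].
elim: L S'L => [|[a v] L IH] S'L.
  by have [w [m [Sw ->]]] := S'_S _ S'v0; exists (l0 + m), w, [::]; rewrite tshiftD.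
have [|l1 [w1 [L1 [Sw1 [SL1 e1]]]]] := IH.
  by move=> p p_L; apply: S'L; rewrite inE p_L orbT.
have [w [m [Sw ev]]] := S'_S _ (S'L _ (mem_head _ _)); rewrite /= in ev.
exists l1, w1, ((a + m, w) :: L1); split=> //; split; last by rewrite /= e1 ev tshiftD.
by move=> p /[!inE] /orP [/eqP -> //|]; apply: SL1.
Qed.

Lemma tspan_mono (S S' : vec -> Prop) x :
  (forall v, S' v -> S v) -> tspan S' x -> tspan S x.
Proof. by move=> S'_S; apply: tspan_shifts => v /S'_S Sv; exists v, 0; rewrite tshift0. Qed.

Lemma tspan_tclosed (X S : vec -> Prop) x :
  tclosed X -> (forall v, S v -> X v) -> tspan S x -> X x.
Proof.
move=> [Xmax Xshift] S_X [l0 [v0 [L [Sv0 [SL ->]]]]].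
elim: L SL => [|p L IH] SL /=; first exact/Xshift/S_X.
apply: Xmax; first by apply/Xshift/S_X/SL; rewrite mem_head.
by apply: IH => q q_L; apply: SL; rewrite inE q_L orbT.
Qed.

Lemma tspan_sub (S : vec -> Prop) v : S v -> tspan S v.
Proof. by move=> Sv; exists 0, v, [::]; rewrite /= tshift0. Qed.

End MaxPlusMatrix.

Section Idempotent.
Variables (R : realType) (n : nat) (E : 'M[R]_n.+1).
Hypothesis idemE : tidempotent E.
Local Notation N := n.+1.
Local Notation vec := 'cV[R]_N.

Lemma idem_le i k j : E i k + E k j <= E i j.
Proof. by have := tmul_ge E E i k j; rewrite idemE. Qed.

Lemma idem_attained i j : exists k, E i j = E i k + E k j.
Proof. by have := tmul_attained E E i j; rewrite idemE. Qed.

Lemma diag_le0 i : E i i <= 0.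
Proof. by have := idem_le i i i; lra. Qed.

Lemma idem_factor_crit i j : exists k, E k k = 0 /\ E i j = E i k + E k j.
Proof.
(* Walking along k -> f k keeps E i j factored through the current node; the
   weight gained between two visits of a periodic node k forces E k k >= 0. *)
have [f f_mid] := choice (fun k => idem_attained k j).
pose through k := E i j = E i k + E k j.
have through_f k : through k -> through (f k) /\ E i (f k) = E i k + E k (f k).
  rewrite /through => tk; have := f_mid k.
  by have := idem_le i k (f k); have := idem_le i (f k) j; lra.
have through_iter m k : through k -> through (iter m f k).
  by move=> tk; elim: m => // m IH; rewrite iterS; exact: (through_f _ IH).1.
have via_k m k : through k -> E i (iter m.+1 f k) <= E i k + E k (iter m.+1 f k).
  move=> tk; elim: m => [|m IH]; first by rewrite (through_f k tk).2.
  rewrite iterS (through_f _ (through_iter m.+1 k tk)).2.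
  by have := idem_le k (iter m.+1 f k) (f (iter m.+1 f k)); lra.
have [k0 tk0] := idem_attained i j.
have [p [m loop]] := iter_periodic_point f k0.
exists (iter p f k0); split; last exact: through_iter.
apply/le_anti; rewrite diag_le0 /=.
by have := via_k m _ (through_iter p k0 tk0); rewrite loop; lra.
Qed.

Lemma crit_exists : exists k, E k k = 0.
Proof. by have [k [Ekk _]] := idem_factor_crit ord0 ord0; exists k. Qed.

Lemma teigenspace_col j : teigenspace E 0 (col j E).
Proof. by rewrite /teigenspace tmulv_col idemE tshift0. Qed.

Lemma teigenspace_crit_cols x : teigenspace E 0 x ->
  tspan (fun v => exists j, E j j = 0 /\ v = col j E) x.
Proof.
move=> /teigenspaceP [x_ge x_att]; have [m0 Em0] := crit_exists.
pose L := [seq (x m 0, col m E) | m <- enum 'I_N & E m m == 0].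
exists (x m0 0), (col m0 E), L; split; first by exists m0.
split; first by move=> p /mapP [m]; rewrite mem_filter => /andP [/eqP Emm _] ->; exists m.
apply/matrixP => i z; rewrite ord1; apply/le_anti/andP; split.
  have [k xk] := x_att i; have [m [Emm Eik]] := idem_factor_crit i k.
  have L_m : (x m 0, col m E) \in (x m0 0, col m0 E) :: L.
    rewrite inE; apply/orP; right; apply/mapP.
    by exists m; rewrite // mem_filter Emm eqxx mem_enum.
  apply: le_trans (le_tcomb i L_m); rewrite /= mxE.
  by have := x_ge m k; lra.
apply/tcomb_leP => p; rewrite inE => /orP [/eqP ->|/mapP [m _ ->]] /=;
  by rewrite mxE addrC -[x i 0]add0r x_ge.
Qed.

Lemma colspace_teigenspace x : colspace E x <-> teigenspace E 0 x.
Proof.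
split; first by apply: tspan_tclosed (teigenspace_tclosed E 0) _ => v [j ->];
  exact: teigenspace_col.
by move=> /teigenspace_crit_cols; apply: tspan_mono => v [j [_ ->]]; exists j.
Qed.

Lemma colspace_tclosed : tclosed (colspace E).
Proof.
have [Dmax Dshift] := teigenspace_tclosed E 0.
by split=> [x y|l x]; rewrite !colspace_teigenspace; [exact: Dmax | exact: Dshift].
Qed.

Lemma colspace_crit_cols :
  generates (fun v => exists j, E j j = 0 /\ v = col j E) (colspace E).
Proof.
move=> x; split; first by move=> /colspace_teigenspace; exact: teigenspace_crit_cols.
by apply: tspan_mono => v [j [_ ->]]; exists j.
Qed.

Lemma teigenvalue_idem l : is_teigenvalue E l <-> l = 0.
Proof.
split=> [[x /teigenspaceP [x_ge x_att]]|->]; last first.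
  by exists (col ord0 E); exact: teigenspace_col.
have [m Emm] := crit_exists; have := x_ge m m; rewrite Emm.
have [k xk] := x_att ord0; have [k' xk'] := x_att k.
by have := idem_le ord0 k k'; have := x_ge ord0 k'; lra.
Qed.

Definition path_weight (a : 'I_N) (s : seq 'I_N) (b : 'I_N) : R :=
  \sum_(e <- zip (a :: s) (rcons s b)) E e.2 e.1.

Lemma path_weight_cons a c s b : path_weight a (c :: s) b = E c a + path_weight c s b.
Proof. by rewrite /path_weight /= big_cons. Qed.

Lemma path_weight_nil a b : path_weight a [::] b = E b a.
Proof. by rewrite /path_weight /= big_seq1. Qed.

Lemma path_weight_le a s b : path_weight a s b <= E b a.
Proof.
elim: s a => [|c s IH] a; first by rewrite path_weight_nil.
by rewrite path_weight_cons; have := IH c; have := idem_le b c a; lra.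
Qed.

(* The Kleene star I (+) E: best weight of a possibly empty path from j to i. *)
Definition estar (i j : 'I_N) : R := if i == j then 0 else E i j.

Lemma le_estar i j : E i j <= estar i j.
Proof. by rewrite /estar; case: eqP => [->|_]; rewrite ?diag_le0. Qed.

Lemma estar_le i k j : estar i k + estar k j <= estar i j.
Proof.
rewrite /estar; case: (eqVneq i k) => [->|ik]; first by rewrite add0r.
case: (eqVneq k j) => [<-|kj]; first by rewrite (negbTE ik) addr0.
case: eqP => [ij|_]; last exact: idem_le.
by rewrite ij; have := idem_le j k j; have := diag_le0 j; lra.
Qed.

Lemma path_weight_edge s a0 b0 a b : (a, b) \in zip (a0 :: s) (rcons s b0) ->
  path_weight a0 s b0 <= estar a a0 + E b a + estar b0 b.
Proof.
elim: s a0 => [|c s IH] a0 /=.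
  by rewrite mem_seq1 => /eqP [-> ->]; rewrite path_weight_nil /estar !eqxx; lra.
rewrite path_weight_cons inE => /orP [/eqP [-> ->]|ab_s].
  rewrite /estar eqxx add0r lerD2l; exact/(le_trans (path_weight_le _ _ _))/le_estar.
by have := IH c ab_s; have := estar_le a c a0; have := le_estar c a0; lra.
Qed.

Lemma cycle_mean_le0 x s : cycle_mean E x s <= 0.
Proof.
rewrite /cycle_mean pmulr_lle0 ?invr_gt0 ?ltr0Sn //.
exact: le_trans (path_weight_le x s x) (diag_le0 x).
Qed.

Lemma cycle_mean_loop m : cycle_mean E m [::] = E m m.
Proof. by rewrite /cycle_mean /cycle_weight /= big_seq1 divr1. Qed.

Lemma max_cycle_mean0 : is_max_cycle_mean E 0.
Proof.
split; first exact: cycle_mean_le0.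
by have [m Emm] := crit_exists; exists m, [::]; rewrite cycle_mean_loop.
Qed.

Lemma critical_cycle_weight_ge0 x s : critical_cycle E x s -> 0 <= path_weight x s x.
Proof.
have [m Emm] := crit_exists.
by move=> /(_ m [::]); rewrite cycle_mean_loop Emm pmulr_lge0 ?invr_gt0 ?ltr0Sn.
Qed.

Definition linked (i j : 'I_N) : Prop := E i j + E j i = 0.

Lemma linked_sym i j : linked i j -> linked j i.
Proof. by rewrite /linked addrC. Qed.

Lemma linked_refl i : E i i = 0 -> linked i i.
Proof. by rewrite /linked => ->; rewrite addr0. Qed.

Lemma linked_diag i j : linked i j -> E i i = 0.
Proof.
move=> ij; apply/le_anti; rewrite diag_le0 /=.
by have := idem_le i j i; rewrite /linked in ij; lra.
Qed.

Lemma linked_trans i j k : linked i j -> linked j k -> linked i k.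
Proof.
move=> ij jk; have := linked_diag ij; have := idem_le i k i; have := idem_le i j k.
by have := idem_le k j i; rewrite /linked in ij jk *; lra.
Qed.

Lemma crit_edge_linked a b : crit_edge E a b <-> linked a b.
Proof.
split=> [[x [s [crit ab_s]]]|ab].
  have := path_weight_edge ab_s; have := critical_cycle_weight_ge0 crit.
  have := estar_le a x b; rewrite {3}/estar; case: eqP => [->|_].
    by have := diag_le0 b; rewrite /linked; lra.
  by have := idem_le a b a; have := diag_le0 a; rewrite /linked; lra.
exists a, [:: b]; split; last by rewrite /cycle_edges /= mem_head.
move=> y t; apply: le_trans (cycle_mean_le0 y t) _.
by rewrite /cycle_mean /cycle_weight /= !big_cons big_nil addr0 addrC ab mul0r.
Qed.

Lemma crit_node_diag i : crit_node E i <-> E i i = 0.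
Proof.
split=> [[x [s [crit /(mem_zip_rcons x) [b ib]]]]|Eii].
  by apply: (@linked_diag i b); apply/crit_edge_linked; exists x, s.
exists i, [::]; split; rewrite ?mem_head // => y t.
by rewrite cycle_mean_loop Eii cycle_mean_le0.
Qed.

Lemma same_scc_linked i j : same_scc E i j <-> linked i j.
Proof.
split=> [[/crit_node_diag Eii [_ [ij _]]]|ij].
  suff : i = j \/ linked i j by case=> [<-|//]; exact: linked_refl.
  elim: ij {Eii} => [u v /crit_edge_linked|u|u v w _ [<-|uv] _ [<-|vw]]; auto.
  by right; exact: linked_trans uv vw.
split; first exact/crit_node_diag/(linked_diag ij).
split; first exact/crit_node_diag/(linked_diag (linked_sym ij)).
by split; apply/rt_step/crit_edge_linked => //; exact: linked_sym.
Qed.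

Lemma col_linked i j : linked i j -> col i E = tshift (E j i) (col j E).
Proof.
move=> ij; apply/matrixP => k z; rewrite !mxE; rewrite /linked in ij.
by apply/le_anti/andP; split; [have := idem_le k i j | have := idem_le k j i]; lra.
Qed.

Lemma row_linked i j : linked i j -> (row i E)^T = tshift (E i j) (row j E)^T.
Proof.
move=> ij; apply/matrixP => k z; rewrite !mxE; rewrite /linked in ij.
by apply/le_anti/andP; split; [have := idem_le j i k | have := idem_le i j k]; lra.
Qed.

Lemma linked_col_shift i j l :
  E i i = 0 -> E j j = 0 -> col i E = tshift l (col j E) -> linked i j.
Proof.
move=> Eii Ejj e; have ek k : E k i = l + E k j.
  by have := congr1 (fun v : vec => v k 0) e; rewrite !mxE.
by have := ek i; have := ek j; rewrite /linked; lra.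
Qed.

(* The zero diagonal entry of a critical column is attained by a single term of
   any combination producing it, and that term then dominates the whole column. *)
Lemma crit_col_tspan (S : vec -> Prop) a : E a a = 0 ->
  (forall w, S w -> colspace E w) -> tspan S (col a E) ->
  exists w l, S w /\ col a E = tshift l w.
Proof.
move=> Eaa S_col [l0 [v0 [L [Sv0 [SL e]]]]].
have colE k : tcomb l0 v0 L k 0 = E k a by rewrite /tcomb -e mxE.
have [[l w] wL /= ea] := tcomb_attained l0 v0 L a.
have Sw : S w by move: wL; rewrite inE => /orP [/eqP [_ ->] //|/SL].
have /colspace_teigenspace/teigenspaceP [w_ge _] := S_col _ Sw.
exists w, l; split=> //; apply/matrixP => i z; rewrite ord1 !mxE; apply/le_anti/andP; split.
  by have := w_ge i a; rewrite colE Eaa in ea; lra.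
by rewrite -colE; exact: (le_tcomb i wL).
Qed.

Lemma extremal_colspace x : extremal (colspace E) x ->
  exists j l, E j j = 0 /\ x = tshift l (col j E).
Proof.
move=> [Cx Y_closed]; apply: contrapT => no_col.
have /(tspan_tclosed Y_closed) [|_] := proj1 (colspace_crit_cols x) Cx.
  move=> _ [j [Ejj ->]]; split; first exact/colspace_teigenspace/teigenspace_col.
  by move=> [l e]; apply: no_col; exists j, (- l); rewrite e tshiftD addNr tshift0.
by apply; exists 0; rewrite tshift0.
Qed.

Definition crit_class i : {set 'I_N} := [set j | `[< same_scc E i j >]].

Lemma mem_crit_class i j : (j \in crit_class i) = `[< linked i j >].
Proof. by rewrite inE; apply: asbool_equiv_eq; exact: same_scc_linked. Qed.

Lemma crit_class_eq i j : linked i j -> crit_class i = crit_class j.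
Proof.
move=> ij; apply/setP => k; rewrite !mem_crit_class; apply: asbool_equiv_eq.
by split=> [ik|jk]; [exact: linked_trans (linked_sym ij) ik | exact: linked_trans ij jk].
Qed.

Lemma crit_representatives : exists reps : seq 'I_N,
  [/\ size reps = n_scc E, uniq reps, {in reps, forall r, E r r = 0},
      {in reps &, forall r r', linked r r' -> r = r'} &
      forall i, E i i = 0 -> exists2 r, r \in reps & linked i r].
Proof.
rewrite /n_scc -/crit_class; set C := imset _ _.
have C_class c : exists r, c \in C -> E r r = 0 /\ c = crit_class r.
  case: (boolP (c \in C)) => [/imsetP [i /[!inE] /asboolP /crit_node_diag Eii ->]|_].
    by exists i.
  by exists ord0.
have [rep rep_class] := choice C_class.
have rep_inj : {in C &, injective rep}.
  by move=> c c' /rep_class [_ ec] /rep_class [_ ec'] e; rewrite ec ec' e.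
exists [seq rep c | c <- enum C]; split.
- by rewrite size_map -cardE.
- by rewrite map_inj_in_uniq ?enum_uniq // => c c'; rewrite !mem_enum; exact: rep_inj.
- by move=> _ /mapP [c /[!mem_enum] /rep_class [Err _] ->].
- move=> _ _ /mapP [c /[!mem_enum] cC ->] /mapP [c' /[!mem_enum] c'C ->] rr'.
  congr rep; rewrite (rep_class c cC).2 (rep_class c' c'C).2; exact: crit_class_eq.
move=> i Eii; have iC : crit_class i \in C.
  by apply: imset_f; rewrite inE; apply/asboolP/crit_node_diag.
exists (rep (crit_class i)); first by apply: map_f; rewrite mem_enum.
have [Err] := rep_class _ iC; set r := rep _ => ir.
have : r \in crit_class r by rewrite mem_crit_class; apply/asboolP/linked_refl.
by rewrite -ir mem_crit_class => /asboolP.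
Qed.

Lemma has_rank_n_scc : has_rank E (n_scc E).
Proof.
have [reps [size_reps reps_uniq reps_crit reps_sep reps_cover]] := crit_representatives.
split.
  exists [seq col r E | r <- reps]; split=> [|x]; first by rewrite size_map.
  split; last first.
    apply: tspan_tclosed colspace_tclosed _ => _ /mapP [r _ ->].
    exact/colspace_teigenspace/teigenspace_col.
  move=> /colspace_crit_cols; apply: tspan_shifts => _ [j [Ejj ->]].
  have [r r_reps jr] := reps_cover j Ejj.
  by exists (col r E), (E r j); split; [exact: map_f | exact: col_linked].
move=> S genS; rewrite -size_reps.
apply: (@leq_size_rel _ _ _ _ (fun r w => exists l, col r E = tshift l w)) => //.
  move=> r r_reps; have S_col w : w \in S -> colspace E w by move/tspan_sub/genS.
  have /genS/(crit_col_tspan (reps_crit r r_reps) S_col) [w [l [Sw e]]] :=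
    proj2 (colspace_teigenspace _) (teigenspace_col r).
  by exists w => //; exists l.
move=> r r' r_reps r'_reps w [l e] [l' e']; apply: reps_sep => //.
apply: (@linked_col_shift _ _ (l - l')); rewrite ?reps_crit //.
by rewrite e e' tshiftD subrK.
Qed.

End Idempotent.

Theorem corollary5p2 (R : realType) (n : nat) (E : 'M[R]_n.+1) :
  tidempotent E ->
  (* (i) *)
  ((forall l : R, is_teigenvalue E l <-> l = 0) /\
   is_max_cycle_mean E 0 /\
   (forall x, teigenspace E 0 x <-> colspace E x)) /\
  (* (ii) *)
  (forall i, E i i = 0 <-> crit_node E i) /\
  (* (iii) *)
  generates (fun v => exists j, E j j = 0 /\ v = col j E) (colspace E) /\
  (* (iv) *)
  (forall x, extremal (colspace E) x ->
     exists j (l : R), E j j = 0 /\ x = tshift l (col j E)) /\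
  (* (v) *)
  generates (fun v => exists i, E i i = 0 /\ v = (row i E)^T) (rowspace E) /\
  (* (vi) *)
  (forall x, extremal (rowspace E) x ->
     exists i (l : R), E i i = 0 /\ x = tshift l (row i E)^T) /\
  (* (vii) *)
  has_rank E (n_scc E) /\
  (* (viii) *)
  (forall i j, same_scc E i j -> crit_edge E i j) /\
  (* (ix) *)
  (forall i j, same_scc E i j -> exists l : R, col i E = tshift l (col j E)) /\
  (* (x) *)
  (forall i j, same_scc E i j ->
     exists l : R, (row i E)^T = tshift l (row j E)^T).
Proof.
move=> idemE; have idemT := tidempotent_tr idemE.
split.
  split; first exact: teigenvalue_idem.
  split; first exact: max_cycle_mean0.
  by move=> x; exact: iff_sym (colspace_teigenspace idemE x).
split; first by move=> i; exact: iff_sym (crit_node_diag idemE i).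
split; first exact: colspace_crit_cols.
split; first exact: extremal_colspace.
split.
  rewrite rowspace_tr => x; rewrite (colspace_crit_cols idemT x).
  by split; apply: tspan_mono => _ [j [Ejj ->]]; exists j; rewrite tr_row mxE in Ejj *.
split.
  rewrite rowspace_tr => x /(extremal_colspace idemT) [j [l [Ejj ->]]].
  by exists j, l; rewrite mxE in Ejj; rewrite tr_row.
split; first exact: has_rank_n_scc.
split; first by move=> i j /(same_scc_linked idemE) /(crit_edge_linked idemE).
split; first by move=> i j /(same_scc_linked idemE) ij; exists (E j i); exact: col_linked.
by move=> i j /(same_scc_linked idemE) ij; exists (E i j); exact: row_linked.
Qed.
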